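(* Let $G=(V,E)$ be a classical graph with vertex set $V=[n]$ and let $\phi\colon M_n\to M_d$ be an orthogonal representation of $\mathcal{S}_G=\operatorname{span}\{|e_i\rangle\langle e_j| : i=j\text{ or } i \text{ adjacent to } j\}$. For each $i\in[n]$ let $v_i$ be a vector in the range of $\phi(|e_i\rangle\langle e_i|)$. Then the map $f\colon V\to\mathbb{C}^d$, $f(i)=v_i$, is an orthogonal representation of $G$.
   Context: $(|e_k\rangle)$ is the standard basis of $\mathbb{C}^n$. A classical orthogonal representation of $G$ is a map $f\colon V\to\mathbb{C}^d$ such that $f(i)\perp f(j)$ whenever $i\neq j$ and $i,j$ are not adjacent. Elements $a,b$ of a $C^*$-algebra are orthogonal, $a\perp b$, if $ab=ba=a^*b=ab^*=0$. For a quantum graph $\mathcal{S}\subseteq M_n$ (a subspace closed under adjoints containing $I_n$), a completely positive map $\phi\colon M_n\to M_d$ is an orthogonal representation of $\mathcal{S}$ if $\phi(A)\perp\phi(B)$ for all $A,B\in M_n$ with $A\mathcal{S}B=B\mathcal{S}A=A^*\mathcal{S}B=A\mathcal{S}B^*=\{0\}$. *)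

From HB Require Import structures.
From mathcomp Require Import all_boot all_order all_algebra.
Set Implicit Arguments. Unset Strict Implicit. Unset Printing Implicit Defensive.
Import Order.TTheory GRing.Theory Num.Theory.
Local Open Scope ring_scope.

Section Defs.
Variable C : numClosedFieldType.

Definition adjmx (m n : nat) (A : 'M[C]_(m, n)) : 'M[C]_(n, m) :=
  \matrix_(i, j) (A j i)^*.

Definition psdf (T : finType) (A : T -> T -> C) : Prop :=
  exists (k : nat) (B : 'I_k -> T -> C),
    forall x y, A x y = \sum_(l < k) (B l x)^* * B l y.

(* An element of M_m(M_n) is a block family X : 'I_m -> 'I_m -> 'M_n,
   viewed as a kernel on 'I_m * 'I_n. *)
Definition completely_positive (n d : nat) (phi : 'M[C]_n -> 'M[C]_d) : Prop :=
  linear phi /\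
  forall (m : nat) (X : 'I_m -> 'I_m -> 'M[C]_n),
    psdf (fun p q : 'I_m * 'I_n => X p.1 q.1 p.2 q.2) ->
    psdf (fun p q : 'I_m * 'I_d => phi (X p.1 q.1) p.2 q.2).

Definition orthmx (d : nat) (a b : 'M[C]_d) : Prop :=
  a *m b = 0 /\ b *m a = 0 /\ adjmx a *m b = 0 /\ a *m adjmx b = 0.

Definition qorth_rep (n d : nat) (S : {vspace 'M[C]_n})
    (phi : 'M[C]_n -> 'M[C]_d) : Prop :=
  completely_positive phi /\
  forall A B : 'M[C]_n,
    (forall X, X \in S ->
        [/\ A *m X *m B = 0, B *m X *m A = 0,
            adjmx A *m X *m B = 0 & A *m X *m adjmx B = 0]) ->
    orthmx (phi A) (phi B).

Definition SG (n : nat) (e : rel 'I_n) : {vspace 'M[C]_n} :=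
  <<[seq delta_mx p.1 p.2 | p <- enum [pred p : 'I_n * 'I_n | (p.1 == p.2) || e p.1 p.2]]>>%VS.

Definition dotv (d : nat) (u v : 'cV[C]_d) : C :=
  \sum_(k < d) (u k 0)^* * v k 0.

Definition in_range (d : nat) (M : 'M[C]_d) (v : 'cV[C]_d) : Prop :=
  exists w : 'cV[C]_d, v = M *m w.

Definition orth_rep (n d : nat) (e : rel 'I_n) (f : 'I_n -> 'cV[C]_d) : Prop :=
  forall i j, i != j -> ~~ e i j -> dotv (f i) (f j) = 0.

End Defs.

From HB Require Import structures.
From mathcomp Require Import all_boot all_order all_algebra.
Set Implicit Arguments. Unset Strict Implicit. Unset Printing Implicit Defensive.
Import GRing.Theory Num.Theory.
Local Open Scope ring_scope.

(* For a non-adjacent pair i != j, every X in S_G has X_ij = X_ji = 0, so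
   E_ii X E_jj = X_ij E_ij vanishes (and likewise with i, j swapped or with
   adjoints, as E_ii is self-adjoint).  Hence phi(E_ii) and phi(E_jj) are
   orthogonal, in particular phi(E_ii)^* phi(E_jj) = 0, which kills
   <phi(E_ii) w, phi(E_jj) w'> = w^* phi(E_ii)^* phi(E_jj) w'. *)

Section Adjoint.
Variable C : numClosedFieldType.

Lemma adjmxM (m n p : nat) (A : 'M[C]_(m, n)) (B : 'M[C]_(n, p)) :
  adjmx (A *m B) = adjmx B *m adjmx A.
Proof.
apply/matrixP=> a b; rewrite /adjmx !mxE rmorph_sum.
by apply: eq_bigr => k _; rewrite !mxE rmorphM mulrC.
Qed.

Lemma adjmx_delta (m n : nat) (i : 'I_m) (j : 'I_n) :
  adjmx (delta_mx i j : 'M[C]_(m, n)) = delta_mx j i.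
Proof. by apply/matrixP=> a b; rewrite !mxE andbC; case: (_ && _); rewrite (conjC0, conjC1). Qed.

Lemma dotv_adjmx (d : nat) (u w : 'cV[C]_d) : dotv u w = (adjmx u *m w) 0 0.
Proof. by rewrite /dotv !mxE; apply: eq_bigr => k _; rewrite !mxE. Qed.

Lemma dotv_mulmx_eq0 (d : nat) (a b : 'M[C]_d) (w w' : 'cV[C]_d) :
  adjmx a *m b = 0 -> dotv (a *m w) (b *m w') = 0.
Proof.
move=> ab0; rewrite dotv_adjmx adjmxM -mulmxA (mulmxA (adjmx a)) ab0.
by rewrite mul0mx mulmx0 mxE.
Qed.

End Adjoint.

Section QuantumGraph.
Variables (C : numClosedFieldType) (n : nat).

Lemma mulmx_delta_delta (i j k l : 'I_n) (X : 'M[C]_n) :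
  delta_mx i j *m X *m delta_mx k l = X j k *: delta_mx i l.
Proof.
apply/matrixP=> a b; rewrite !mxE (bigD1 k) //= big1 => [|c /negbTE ck]; last first.
  by rewrite [delta_mx k l c b]mxE ck mulr0.
rewrite !mxE eqxx addr0 (bigD1 j) //= big1 => [|c /negbTE cj]; last first.
  by rewrite !mxE cj andbF mul0r.
rewrite !mxE eqxx andbT addr0.
by case: (a == i); case: (b == l); rewrite ?(mul1r, mulr1, mul0r, mulr0).
Qed.

Variable e : rel 'I_n.

Lemma SG_entry_eq0 (X : 'M[C]_n) (p q : 'I_n) :
  X \in SG C e -> p != q -> ~~ e p q -> X p q = 0.
Proof.
rewrite /SG; set P := [pred r : 'I_n * 'I_n | (r.1 == r.2) || e r.1 r.2].
set s := [seq delta_mx r.1 r.2 | r <- enum P].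
move=> /(@coord_span _ _ _ (in_tuple s)) -> pq npq.
rewrite summxE big1 // => k _; rewrite mxE.
have szs : size s = size (enum P) := size_map _ _.
rewrite /s (nth_map (p, p)) -?szs //.
have : nth (p, p) (enum P) k \in P by rewrite -mem_enum mem_nth -?szs.
case: (nth _ _ _) => r1 r2 /[!inE] /= Pr.
rewrite mxE; case: (p =P r1) => [pr1|_]; last by rewrite mulr0.
case: (q =P r2) => [qr2|_]; last by rewrite mulr0.
by move: Pr; rewrite -pr1 -qr2 (negbTE pq) (negbTE npq).
Qed.

Lemma qorth_rep_delta_orth (d : nat) (phi : 'M[C]_n -> 'M[C]_d) (i j : 'I_n) :
  symmetric e -> qorth_rep (SG C e) phi -> i != j -> ~~ e i j ->
  orthmx (phi (delta_mx i i)) (phi (delta_mx j j)).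
Proof.
move=> e_sym [_ phi_orth] ij nij; apply: phi_orth => X SGX.
have ji : j != i by rewrite eq_sym.
have nji : ~~ e j i by rewrite e_sym.
by rewrite !adjmx_delta !mulmx_delta_delta !SG_entry_eq0 ?scale0r.
Qed.

End QuantumGraph.

Theorem proposition5p5 (C : numClosedFieldType) (n d : nat) (e : rel 'I_n)
    (e_sym : symmetric e) (e_irr : irreflexive e)
    (phi : 'M[C]_n -> 'M[C]_d) (hphi : qorth_rep (SG C e) phi)
    (v : 'I_n -> 'cV[C]_d)
    (hv : forall i, in_range (phi (delta_mx i i)) (v i)) :
  orth_rep e v.
Proof.
move=> i j ij nij.
have [_ [_ [adj_ij _]]] := qorth_rep_delta_orth e_sym hphi ij nij.
have [w ->] := hv i; have [w' ->] := hv j.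
exact: dotv_mulmx_eq0 adj_ij.
Qed.
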